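(* Fix $\lambda\in[0,1]$. Define $f(\mathbf q,\lambda)$ for vectors $\mathbf q=(q_{i,j}^{(k)})_{i\ne j,\,k=\pm1}$ by $$f_{i,j}^{(k)}(\mathbf q,\lambda)=\lambda\Big(p_{i,j}^{(k)}+\sum_{m\ne i,j}p_{i,m}^{(k)}q_{m,j}^{(k)}+\sum_{m\ne i}p_{i,m}^{(-k)}q_{m,i}^{(-k)}q_{i,j}^{(k)}\Big),$$ and define $\mathbf a_0(\lambda)=f(\mathbf 0,\lambda)$, $\mathbf a_{n+1}(\lambda)=f(\mathbf a_n(\lambda),\lambda)$. Then for every $n\ge0$ and every index $(i,j,k)$, $$(\mathbf a_n(\lambda))_{i,j}^{(k)}\le\sum_{m=0}^{2^{n+1}-1}P_{e_i}\big(T(0,A_{i,j}^{(k)})=m\big)\lambda^m.$$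
   Context: Fix an integer $N\ge 3$. Let $\mathcal G_N$ be the groupoid with object set $\{1,\dots,N\}$ generated by arrows $A_{i,j}^{(k)}$, $i\neq j\in\{1,\dots,N\}$, $k\in\{-1,1\}$, with source $i$ and target $j$, subject to the relations $A_{i,j}^{(k)}A_{j,\ell}^{(k)}=A_{i,\ell}^{(k)}$ for all $i,j,\ell$, $k$, with the convention $A_{i,i}^{(k)}:=e_i$ (unit at object $i$). Let $\mathcal A$ be its arrow set. Let $\{W_n\}_{n\ge0}$ be the Markov chain on $\mathcal A$ with $P(W_{n+1}=y\mid W_n=x)=p_{i,j}^{(k)}$ if $x^{-1}y=A_{i,j}^{(k)}$ with $i\ne j$ and $0$ otherwise, where $p_{i,j}^{(k)}\in(0,1)$ and $\sum_{j\ne i}\sum_{k=\pm1}p_{i,j}^{(k)}=1$ for each $i$; $P_x$ denotes the law with $W_0=x$. For $x\in\mathcal A$ let $T(0,x)=\inf\{n\ge0:W_n=W_0x\}$ (possibly $\infty$). *)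

From mathcomp Require Import all_boot all_order all_algebra.
Set Implicit Arguments. Unset Strict Implicit. Unset Printing Implicit Defensive.
Import Order.TTheory GRing.Theory Num.Theory.
Local Open Scope ring_scope.

(* Objects {1..N} are encoded as 'I_N; the color k in {-1,1} is encoded as a
   bool: true <-> k = 1, false <-> k = -1 (so -k is ~~ k).

   Arrows of the groupoid G_N with source i are in bijection with reduced
   words: sequences of steps (v_1,k_1),...,(v_r,k_r) with v_1 <> i,
   v_t <> v_(t+1) and k_t <> k_(t+1) (alternating colors); the arrow is
   A_{i,v_1}^{(k_1)} A_{v_1,v_2}^{(k_2)} ... (free product of the two pair
   groupoids of colors +1 and -1).  We store the word reversed (last step
   first).  The identity e_i is the empty word. *)

Section Groupoid.
Variable N : nat.
Definition step_t := ('I_N * bool)%type.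

Definition gtarget (i : 'I_N) (w : seq step_t) : 'I_N :=
  match w with [::] => i | (v, _) :: _ => v end.

(* right multiplication x |-> x * A_{t,j}^{(k)} where t = gtarget i w,
   assuming j <> t; uses A_{a,b}^{(k)} A_{b,c}^{(k)} = A_{a,c}^{(k)} and
   A_{a,a}^{(k)} = e_a. *)
Definition gstep (i : 'I_N) (w : seq step_t) (x : step_t) : seq step_t :=
  match w with
  | [::] => [:: x]
  | (v, k') :: w' =>
      if k' == x.2 then
        (if x.1 == gtarget i w' then w' else x :: w')
      else x :: w
  end.

(* the successive positions W_1, ..., W_m of the walk started at the arrow
   (i, w) and performing the generator steps s *)
Fixpoint gtraj (i : 'I_N) (w : seq step_t) (s : seq step_t) : seq (seq step_t) :=
  match s with
  | [::] => [::]
  | x :: s' => let w' := gstep i w x in w' :: gtraj i w' s'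
  end.

Variable R : numDomainType.
Variable p : 'I_N -> 'I_N -> bool -> R.

Fixpoint gweight (i : 'I_N) (w : seq step_t) (s : seq step_t) : R :=
  match s with
  | [::] => 1
  | x :: s' =>
      (if x.1 != gtarget i w then p (gtarget i w) x.1 x.2 else 0)
      * gweight i (gstep i w x) s'
  end.

(* P_{e_i}( T(0, A_{i,j}^{(k)}) = m ): sum, over all step sequences of
   length m, of their probability, restricted to those for which the first
   time n >= 0 with W_n = W_0 A_{i,j}^{(k)} = A_{i,j}^{(k)} equals m. *)
Definition hitP (i j : 'I_N) (k : bool) (m : nat) : R :=
  \sum_(s : m.-tuple step_t)
     (if index [:: (j, k)] ([::] :: gtraj i [::] s) == m
      then gweight i [::] s else 0).

Definition fmap (q : 'I_N -> 'I_N -> bool -> R) (lam : R)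
    (i j : 'I_N) (k : bool) : R :=
  lam * (p i j k
         + \sum_(m : 'I_N | (m != i) && (m != j)) p i m k * q m j k
         + \sum_(m : 'I_N | m != i) p i m (~~ k) * q m i (~~ k) * q i j k).

Fixpoint aseq (lam : R) (n : nat) : 'I_N -> 'I_N -> bool -> R :=
  match n with
  | 0 => fmap (fun _ _ _ => 0) lam
  | n'.+1 => fmap (aseq lam n') lam
  end.

End Groupoid.

(* First-step analysis of the hitting time.  Write [H_L] for the generating function
   [sum_(m < L) P_{e_i}(T(0, A_{i,j}^{(k)}) = m) lam^m] truncated at degree [L].  A walk from [e_i]
   reaches [A_{i,j}^{(k)}] either at its first step; or after a first step to [A_{i,m}^{(k)}],
   m <> i, j, from where, by left invariance, it is a walk from [e_m] aiming at [A_{m,j}^{(k)}]; or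
   after a first step to [A_{i,m}^{(-k)}], and then in particular by first returning to [e_i] (a hit
   of [A_{m,i}^{(-k)}] from [e_m]) and afterwards hitting [A_{i,j}^{(k)}].  The last case produces a
   product of two series truncated at [l + 1], whose terms all have degree at most [2 l].  Hence
   [f(H_(l+1), lam) <= H_(2 l + 2)] coordinatewise, and since [f] is monotone on nonnegative vectors,
   induction gives [a_n <= H_(2^(n+1))]. *)

From mathcomp Require Import all_boot all_order all_algebra.
From mathcomp Require Import ring.
Set Implicit Arguments. Unset Strict Implicit. Unset Printing Implicit Defensive.
Import Order.TTheory GRing.Theory Num.Theory.
Local Open Scope ring_scope.

Section SeqSum.
Variable T : finType.

Fixpoint seqsum (R : nmodType) n (F : seq T -> R) : R :=
  if n is n'.+1 then \sum_(x : T) seqsum n' (fun s => F (x :: s)) else F [::].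

Section NModule.
Variable R : nmodType.
Implicit Types F G : seq T -> R.

Lemma sum_tuple_seqsum n F : \sum_(s : n.-tuple T) F s = seqsum n F.
Proof.
elim: n F => [|n IH] F /=.
  rewrite (eq_bigr (fun _ => F [::])) => [|s _]; last by rewrite tuple0.
  by rewrite sumr_const card_tuple expn0.
rewrite (reindex (fun q : T * n.-tuple T => [tuple of q.1 :: q.2])) /=; last first.
  exists (fun t : n.+1.-tuple T => (thead t, [tuple of behead t])).
    by case=> x t _ /=; congr pair; apply: val_inj.
  by move=> t _; rewrite [RHS]tuple_eta.
rewrite -(pair_big predT predT (fun x (t : n.-tuple T) => F (x :: t))) /=.
by apply: eq_bigr => x _; exact: (IH (fun s => F (x :: s))).
Qed.

Lemma eq_seqsum n F G : (forall s, size s = n -> F s = G s) -> seqsum n F = seqsum n G.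
Proof.
elim: n F G => [|n IH] F G h /=; first exact: h.
by apply: eq_bigr => x _; apply: IH => s hs; apply: h; rewrite /= hs.
Qed.

Lemma seqsum_sum n I (r : seq I) (F : I -> seq T -> R) :
  seqsum n (fun s => \sum_(a <- r) F a s) = \sum_(a <- r) seqsum n (F a).
Proof.
elim: n F => //= n IH F; rewrite exchange_big /=; apply: eq_bigr => x _.
exact: (IH (fun a s => F a (x :: s))).
Qed.

Lemma seqsum_cat a b F :
  seqsum (a + b) F = seqsum a (fun s1 => seqsum b (fun s2 => F (s1 ++ s2))).
Proof.
elim: a F => //= a IH F; apply: eq_bigr => x _.
exact: (IH (fun s => F (x :: s))).
Qed.

End NModule.

Lemma seqsumZ (R : pzSemiRingType) n c (F : seq T -> R) :
  seqsum n (fun s => c * F s) = c * seqsum n F.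
Proof.
elim: n F => //= n IH F; rewrite mulr_sumr; apply: eq_bigr => x _.
exact: (IH (fun s => F (x :: s))).
Qed.

Lemma seqsum_take_drop (R : comPzSemiRingType) (F G : seq T -> R) a n : (a <= n)%N ->
  seqsum n (fun s => F (take a s) * G (drop a s)) = seqsum a F * seqsum (n - a) G.
Proof.
move=> han; rewrite -{1}(subnKC han) seqsum_cat.
transitivity (seqsum a (fun s1 => seqsum (n - a) G * F s1)); last by rewrite seqsumZ mulrC.
apply: eq_seqsum => s1 hs1; rewrite mulrC -seqsumZ; apply: eq_seqsum => s2 _.
by rewrite take_size_cat // drop_size_cat.
Qed.

Section Order.
Variable R : numDomainType.
Implicit Types F G : seq T -> R.

Lemma ler_seqsum n F G : (forall s, size s = n -> F s <= G s) -> seqsum n F <= seqsum n G.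
Proof.
elim: n F G => [|n IH] F G h /=; first exact: h.
by apply: ler_sum => x _; apply: IH => s hs; apply: h; rewrite /= hs.
Qed.

Lemma seqsum_ge0 n F : (forall s, size s = n -> 0 <= F s) -> 0 <= seqsum n F.
Proof.
move=> h; apply: le_trans (ler_seqsum (F := fun => 0) h).
by elim: (n) => //= n' IH; apply: sumr_ge0.
Qed.

End Order.
End SeqSum.

Section TruncatedSeries.
Variable R : realDomainType.
Implicit Types (F A B : nat -> R) (lam : R).

Lemma ler_sum_subrange F m n M : (m <= n)%N -> (n <= M)%N -> (forall u, 0 <= F u) ->
  \sum_(m <= u < n) F u <= \sum_(0 <= u < M) F u.
Proof.
move=> hmn hnM hF.
rewrite (big_cat_nat (leq0n m) (leq_trans hmn hnM)) /= (big_cat_nat hmn hnM) /=.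
by rewrite addrCA lerDl addr_ge0 // sumr_ge0.
Qed.

Lemma ler_sum_ord_widen F L M : (L <= M)%N -> (forall u, 0 <= F u) ->
  \sum_(u < L) F u <= \sum_(u < M) F u.
Proof. by move=> hLM hF; rewrite -!(big_mkord xpredT); apply: ler_sum_subrange. Qed.

(* Every product [A a * B b * lam ^+ (a + b)] with [a, b <= l] is the term [(a + b, a)] on the right. *)
Lemma ler_mul_truncated_series A B lam l : 0 <= lam ->
  (forall a, 0 <= A a) -> (forall b, 0 <= B b) ->
  (\sum_(a < l.+1) A a * lam ^+ a) * (\sum_(b < l.+1) B b * lam ^+ b)
  <= \sum_(u < (l.*2).+1) (\sum_(a < u.+1) A a * B (u - a)%N) * lam ^+ u.
Proof.
move=> hl hA hB; set M := (l.*2).+1.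
set K := fun a u : nat => if (a <= u)%N then A a * B (u - a)%N * lam ^+ u else 0.
have K_ge0 a u : 0 <= K a u.
  by rewrite /K; case: ifP => // _; rewrite !mulr_ge0 // exprn_ge0.
have -> : \sum_(u < M) (\sum_(a < u.+1) A a * B (u - a)%N) * lam ^+ u =
          \sum_(a < M) \sum_(u < M) K a u.
  rewrite exchange_big /=; apply: eq_bigr => u _.
  rewrite (big_ord_widen M (fun a => A a * B (u - a)%N)) ?ltn_ord // big_mkcond mulr_suml.
  by apply: eq_bigr => a _; rewrite /K ltnS; case: ifP; rewrite ?mul0r.
have hlM : (l.+1 <= M)%N by rewrite /M ltnS -addnn leq_addl.
apply: (le_trans _ (ler_sum_ord_widen (F := fun a => \sum_(u < M) K a u) hlM
  (fun a => sumr_ge0 _ (fun (u : 'I_M) _ => K_ge0 a u)))).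
rewrite mulr_suml; apply: ler_sum => a _.
rewrite mulr_sumr -(big_mkord xpredT (K a)).
have haM : (a + l.+1 <= M)%N by rewrite /M -addnn addnS ltnS leq_add2r -ltnS ltn_ord.
apply: (le_trans _ (ler_sum_subrange (leq_addr _ _) haM (K_ge0 a))).
rewrite (big_addn 0 (a + l.+1) a) addKn big_mkord le_eqVlt; apply/orP; left; apply/eqP.
apply: eq_bigr => b _; rewrite /K leq_addl addnK exprD.
by rewrite mulrA -!mulrA; congr (_ * _); rewrite mulrC -!mulrA; congr (_ * _); rewrite mulrC.
Qed.

End TruncatedSeries.

Lemma index_map_in (A : eqType) (f : A -> A) (a : A) (L : seq A) :
  {in L, forall y, (f y == a) = (y == a)} -> index a (map f L) = index a L.
Proof.
elim: L => //= y L IH h; rewrite h ?mem_head //; case: eqP => // _.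
by rewrite IH // => z hz; apply: h; rewrite in_cons hz orbT.
Qed.

Section Words.
Variable N : nat.
Local Notation step := (step_t N).
Implicit Types (b : 'I_N) (x : step) (w s : seq step).

(* Words are stored reversed, so the first step of [w] is the last item of the list. *)
Definition first_step w : option step := if w is y :: w' then Some (last y w') else None.

Definition alternating b w :=
  (if first_step w is Some y then y.1 != b else true) && sorted (fun y z => y.2 != z.2) w.

Definition gend b w s := last w (gtraj b w s).

Lemma gtraj_cat b w s1 s2 :
  gtraj b w (s1 ++ s2) = gtraj b w s1 ++ gtraj b (gend b w s1) s2.
Proof. by elim: s1 w => //= x s1 IH w; rewrite IH. Qed.

Lemma size_gtraj b w s : size (gtraj b w s) = size s.
Proof. by elim: s w => //= x s IH w; rewrite IH. Qed.

Lemma alternating_gstep b w x :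
  alternating b w -> x.1 != gtarget b w -> alternating b (gstep b w x).
Proof.
case: x => xv xk; case: w => [|[v k] [|[z kz] w']] /=.
- by rewrite /alternating /= andbT.
- rewrite /alternating /= !andbT => hv hx.
  case: (k =P xk) => [_|hkx] /=; last by rewrite hv andbT eq_sym; apply/eqP.
  by case: (xv =P b) => [//|hxb] /=; rewrite andbT; apply/eqP.
- rewrite /alternating /= => /andP[hb /andP[hk hp]] hx.
  case: (k =P xk) => [<-|hkx]; first by case: eqP => _; rewrite /alternating /= ?hb ?hk ?hp.
  by rewrite /alternating /= hb hk hp !andbT eq_sym; apply/eqP.
Qed.

Lemma first_step_gstep b w x :
  first_step (gstep b w x) = first_step w \/ (size (gstep b w x) <= 1)%N.
Proof.
case: x => xv xk; case: w => [|[v k] [|[z kz] w']] /=; first by right.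
- by case: eqP => _; [case: eqP => _; right | left].
- by case: eqP => _; [case: eqP => _; left | left].
Qed.

Definition walk b s := [::] :: gtraj b [::] s.

Lemma size_walk b s : size (walk b s) = (size s).+1.
Proof. by rewrite /= size_gtraj. Qed.

Lemma walk_cat b s1 s2 : walk b (s1 ++ s2) = walk b s1 ++ gtraj b (gend b [::] s1) s2.
Proof. by rewrite /walk gtraj_cat. Qed.

Lemma gend_walk b s : gend b [::] s = last [::] (walk b s).
Proof. by []. Qed.

Lemma walk_rcons_gend b s : walk b s = rcons (belast [::] (gtraj b [::] s)) (gend b [::] s).
Proof. exact: lastI. Qed.

(* The first step of a word only changes when the word has length at most one, so a word with first
   step [d] is reached only after the one-step word [[:: d]]. *)
Lemma index_first_step b d w s y :
  (first_step w = Some d -> w = [:: d]) ->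
  y \in w :: gtraj b w s -> first_step y = Some d ->
  (index [:: d] (w :: gtraj b w s) <= index y (w :: gtraj b w s))%N.
Proof.
elim: s w => [|x s IH] w hw.
  by rewrite mem_seq1 => /eqP -> /hw ->; rewrite /= eqxx.
rewrite in_cons => /orP[/eqP -> /hw -> | hy hyd]; first by rewrite /= eqxx.
have [-> | hwd] := eqVneq w [:: d]; first by rewrite /= eqxx.
have [hwy | hwy] := eqVneq w y; first by rewrite -hwy in hyd; case/eqP: hwd; apply: hw.
rewrite /= (negPf hwd) (negPf hwy) ltnS; apply: IH hy hyd.
case: (first_step_gstep b w x) => [-> /hw /eqP | ]; first by rewrite (negPf hwd).
by case: (gstep b w x) => [|e [|? ?]] //= _ [->].
Qed.

Section LeftMultiplication.
Variables (i m : 'I_N) (c : bool).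

(* [lmul w] is the word of [A_{i,m}^{(c)} x], where [x] is the arrow with source [m] and word [w]. *)
Fixpoint lmul w : seq step :=
  match w with
  | [::] => [:: (m, c)]
  | y :: w' =>
      if w' is [::] then
        (if y.2 == c then (if y.1 == i then [::] else [:: y]) else [:: y; (m, c)])
      else y :: lmul w'
  end.

Lemma gtarget_lmul w : gtarget i (lmul w) = gtarget m w.
Proof.
case: w => [|[v k] [|z w']] //=.
by case: ifP => _; [case: ifP => // /eqP -> | ].
Qed.

Lemma lmul_cons y w : w != [::] -> lmul (y :: w) = y :: lmul w.
Proof. by case: w. Qed.

Lemma lmul_eq_nil w : lmul w = [::] -> w = [:: (i, c)].
Proof.
case: w => [|[v k] [|z w']] //=.
by case: eqP => // ->; case: eqP => // ->.
Qed.

Lemma lmul_inv_step : lmul [:: (i, c)] = [::].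
Proof. by rewrite /= !eqxx. Qed.

Lemma lmul_comp_step j : j != i -> lmul [:: (j, c)] = [:: (j, c)].
Proof. by move=> hj /=; rewrite eqxx (negPf hj). Qed.

Lemma gstep_lmul w x : alternating m w -> x.1 != gtarget m w -> i != m ->
  gstep i (lmul w) x = lmul (gstep m w x).
Proof.
case: x => xv xk /=; case: w => [|[v k] [|[z kz] w']].
- move=> _ hx him /=; case: eqP => [<-|hk]; first by rewrite eqxx; case: eqP.
  by rewrite (introF eqP (nesym hk)).
- rewrite /alternating /= andbT => hv hx him.
  by repeat (case: eqP => [?|?] //=; subst); move: hx hv him; rewrite ?eqxx.
- move=> _ _ _; rewrite lmul_cons // /=.
  have := gtarget_lmul ((z, kz) :: w'); set L := lmul _ => hL.
  by case: (k =P xk) => //= _; rewrite hL; case: eqP.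
Qed.

Lemma lmul_eq_comp_step j w : alternating m w -> m != j -> j != i ->
  lmul w = [:: (j, c)] -> w = [:: (j, c)].
Proof.
case: w => [|[v k] [|[z kz] w']].
- by move=> _ hmj _ [/eqP]; rewrite (negPf hmj).
- by move=> _ _ _ /=; case: eqP => _; [case: eqP|].
- rewrite lmul_cons // /alternating /= => /andP[_ /andP[hk _]] _ _ [_ hk'].
  by move/(@lmul_eq_nil ((z, kz) :: w')) => [_ hkz _]; rewrite hk' hkz eqxx in hk.
Qed.

Lemma first_step_lmul j w : lmul w = [:: (j, ~~ c)] -> first_step w = Some (i, c).
Proof.
case: w => [|[v k] [|[z kz] w']].
- by case; case: c.
- rewrite /=; case: eqP => [->|]; last by [].
  by case: eqP => // _ [_]; case: c.
- by rewrite lmul_cons // => -[_ _ /(@lmul_eq_nil ((z, kz) :: w')) [-> -> ->]].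
Qed.

End LeftMultiplication.
End Words.

Section Weights.
Variable N : nat.
Local Notation step := (step_t N).
Variables (R : numDomainType) (p : 'I_N -> 'I_N -> bool -> R).
Implicit Types (b : 'I_N) (x : step) (w s : seq step).

Lemma gweight_cat b w s1 s2 :
  gweight p b w (s1 ++ s2) = gweight p b w s1 * gweight p b (gend b w s1) s2.
Proof. by elim: s1 w => /= [|x s1 IH] w; rewrite ?mul1r // IH mulrA. Qed.

Lemma gweight_ge0 b w s :
  (forall a a' k, a != a' -> 0 <= p a a' k) -> 0 <= gweight p b w s.
Proof.
move=> hp; elim: s w => /= [|x s IH] w //.
by apply: mulr_ge0 => //; case: ifP => // h; apply: hp; rewrite eq_sym.
Qed.

Lemma gweight_neq0_step b w x s : gweight p b w (x :: s) != 0 -> x.1 != gtarget b w.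
Proof. by rewrite /=; case: ifP => //; rewrite mul0r eqxx. Qed.

Lemma alternating_gtraj b w s : alternating b w -> gweight p b w s != 0 ->
  {in gtraj b w s, forall y, alternating b y}.
Proof.
elim: s w => //= x s IH w hw hs.
have hx := gweight_neq0_step hs; have hw' := alternating_gstep hw hx.
move: hs; rewrite /= hx mulf_eq0 negb_or => /andP[_ hs] y.
by rewrite in_cons => /orP[/eqP ->|]; [|apply: IH].
Qed.

Section LeftInvariance.
Variables (i m : 'I_N) (c : bool).
Hypothesis him : i != m.

Lemma gweight_lmul w s : alternating m w ->
  gweight p i (lmul i m c w) s = gweight p m w s.
Proof.
elim: s w => //= x s IH w hw.
rewrite gtarget_lmul; case: ifP => hx; last by rewrite !mul0r.
by rewrite gstep_lmul // IH // alternating_gstep.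
Qed.

Lemma gtraj_lmul w s : alternating m w -> gweight p m w s != 0 ->
  gtraj i (lmul i m c w) s = map (lmul i m c) (gtraj m w s).
Proof.
elim: s w => //= x s IH w hw hs.
have hx := gweight_neq0_step hs; move: hs; rewrite /= hx mulf_eq0 negb_or => /andP[_ hs].
by rewrite gstep_lmul // IH // alternating_gstep.
Qed.

Lemma gweight_first_step s :
  gweight p i [::] ((m, c) :: s) = p i m c * gweight p m [::] s.
Proof. by rewrite /= eq_sym him (gweight_lmul (w := [::])). Qed.

Lemma walk_first_step s : gweight p m [::] s != 0 ->
  walk i ((m, c) :: s) = [::] :: map (lmul i m c) (walk m s).
Proof. by move=> hs; rewrite /walk /= -(gtraj_lmul (w := [::])). Qed.

End LeftInvariance.
End Weights.

Section FirstHit.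
Variable N : nat.
Local Notation step := (step_t N).
Variables (R : numDomainType) (p : 'I_N -> 'I_N -> bool -> R).
Hypothesis p_ge0 : forall a a' k, a != a' -> 0 <= p a a' k.
Implicit Types (i j m : 'I_N) (k c : bool) (s : seq step).

Definition first_hit_weight i j k a s :=
  if index [:: (j, k)] (walk i s) == a then gweight p i [::] s else 0.

Lemma hitP_seqsum i j k a : hitP p i j k a = seqsum a (first_hit_weight i j k a).
Proof. exact: sum_tuple_seqsum. Qed.

Lemma first_hit_weight_ge0 i j k a s : 0 <= first_hit_weight i j k a s.
Proof. by rewrite /first_hit_weight; case: ifP => // _; apply: gweight_ge0. Qed.

Lemma hitP_ge0 i j k a : 0 <= hitP p i j k a.
Proof. by rewrite hitP_seqsum; apply: seqsum_ge0 => s _; apply: first_hit_weight_ge0. Qed.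

Lemma hitP0 i j k : hitP p i j k 0 = 0.
Proof. by rewrite hitP_seqsum. Qed.

Lemma first_hit_weight1 i j k : i != j -> first_hit_weight i j k 1 [:: (j, k)] = p i j k.
Proof. by move=> hij; rewrite /first_hit_weight /= eqxx /= eq_sym hij mulr1. Qed.

Lemma alternating_walk b s : gweight p b [::] s != 0 -> {in walk b s, forall y, alternating b y}.
Proof.
by move=> hs y; rewrite /walk in_cons => /orP[/eqP -> //|]; apply: (alternating_gtraj _ hs).
Qed.

Lemma first_hit_weight_lmul i j k m a s : m != i -> m != j -> i != j ->
  first_hit_weight i j k a.+1 ((m, k) :: s) = p i m k * first_hit_weight m j k a s.
Proof.
move=> hmi hmj hij; have him : i != m by rewrite eq_sym.
have hji : j != i by rewrite eq_sym.
rewrite /first_hit_weight gweight_first_step //.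
have [-> | hs] := eqVneq (gweight p m [::] s) 0; first by rewrite mulr0 !if_same mulr0.
have index_cons_nil L : index [:: (j, k)] ([::] :: L) = (index [:: (j, k)] L).+1 by [].
rewrite (walk_first_step _ him hs) (index_cons_nil (map (lmul i m k) (walk m s))).
rewrite index_map_in => [|y /(alternating_walk hs) hy].
  by rewrite eqSS; case: ifP; rewrite ?mulr0.
have [-> | hyj] := eqVneq y [:: (j, k)]; first by rewrite lmul_comp_step ?eqxx.
by apply/negbTE; apply: contra hyj => /eqP/(lmul_eq_comp_step hy hmj hji) ->.
Qed.

Lemma index_walk_first_hit i j k a s : (a <= size s)%N ->
  first_hit_weight i j k a (take a s) != 0 -> index [:: (j, k)] (walk i s) = a.
Proof.
rewrite /first_hit_weight => ha; case: ifP => [/eqP hidx _|]; last by rewrite eqxx.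
have hin : [:: (j, k)] \in walk i (take a s) by rewrite -index_mem hidx size_walk size_takel.
by rewrite -(cat_take_drop a s) walk_cat index_cat hin.
Qed.

(* Translated by [A_{i,m}^{(c)}], a walk from [e_m] that first hits [A_{m,i}^{(c)}] at its end
   returns to [e_i] at its end, and visits no [A_{i,j}^{(-c)}] before, since those words start with
   the step [(i, c)]. *)
Lemma walk_return i m c s : m != i -> first_hit_weight m i c (size s) s != 0 ->
  exists L, [/\ walk i ((m, c) :: s) = rcons L [::], size L = (size s).+1
              & forall j, [:: (j, ~~ c)] \notin L].
Proof.
move=> hmi; have him : i != m by rewrite eq_sym.
rewrite /first_hit_weight; case: ifP => [/eqP hidx hs|]; last by rewrite eqxx.
have hin : [:: (i, c)] \in walk m s by rewrite -index_mem hidx size_walk.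
have hend : gend m [::] s = [:: (i, c)].
  by rewrite /gend (last_nth [::]) size_gtraj -hidx (nth_index _ hin).
exists ([::] :: map (lmul i m c) (belast [::] (gtraj m [::] s))); split.
- by rewrite (walk_first_step _ him hs) walk_rcons_gend hend map_rcons lmul_inv_step.
- by rewrite /= size_map size_belast size_gtraj.
move=> j; rewrite in_cons /=; apply/mapP => -[y hy /esym /first_step_lmul hfs].
have hyw : y \in walk m s by rewrite walk_rcons_gend mem_rcons in_cons hy orbT.
have hlt : (index y (walk m s) < size s)%N.
  by rewrite walk_rcons_gend -cats1 index_cat hy -(size_gtraj m [::] s) -(size_belast [::]) index_mem.
have nil_first_step : first_step [::] = Some (i, c) -> [::] = [:: (i, c)] by [].
by have := index_first_step nil_first_step hyw hfs; rewrite hidx leqNgt hlt.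
Qed.

Lemma first_hit_weight_cat i j k m s1 s2 : m != i ->
  first_hit_weight m i (~~ k) (size s1) s1 != 0 ->
  first_hit_weight i j k (size s2) s2 != 0 ->
  first_hit_weight i j k (size s1 + size s2).+1 ((m, ~~ k) :: s1 ++ s2)
  = p i m (~~ k) * first_hit_weight m i (~~ k) (size s1) s1
      * first_hit_weight i j k (size s2) s2.
Proof.
move=> hmi h1 h2; have him : i != m by rewrite eq_sym.
have [L [hL hsize hnot]] := walk_return hmi h1.
move: h1 h2; rewrite /first_hit_weight.
case: ifP => [_ _|]; last by rewrite eqxx.
case: ifP => [/eqP hidx2 _|]; last by rewrite eqxx.
have hgend : gend i [::] ((m, ~~ k) :: s1) = [::] by rewrite gend_walk hL last_rcons.
have hjL : [:: (j, k)] \in L = false by apply/negbTE; have := hnot j; rewrite negbK.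
rewrite -cat_cons walk_cat hgend hL cat_rcons index_cat hjL hidx2 hsize addSn eqxx.
by rewrite gweight_cat hgend gweight_first_step.
Qed.

Lemma first_hit_weight_return i j k m n s : m != i -> size s = n ->
  p i m (~~ k) * \sum_(a < n.+1) first_hit_weight m i (~~ k) a (take a s)
                                 * first_hit_weight i j k (n - a)%N (drop a s)
  <= first_hit_weight i j k n.+1 ((m, ~~ k) :: s).
Proof.
move=> hmi hs.
set term := fun a : 'I_n.+1 =>
  first_hit_weight m i (~~ k) a (take a s) * first_hit_weight i j k (n - a)%N (drop a s).
have hterm (a : 'I_n.+1) : term a != 0 ->
    index [:: (i, ~~ k)] (walk m s) = a
    /\ p i m (~~ k) * term a = first_hit_weight i j k n.+1 ((m, ~~ k) :: s).
  rewrite mulf_eq0 negb_or => /andP[h1 h2].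
  have han : (a <= n)%N by rewrite -ltnS.
  have hs1 : size (take a s) = a by rewrite size_takel // hs.
  have hs2 : size (drop a s) = (n - a)%N by rewrite size_drop hs.
  split; first by apply: index_walk_first_hit h1; rewrite hs.
  have := first_hit_weight_cat (j := j) (k := k) (s1 := take a s) (s2 := drop a s) hmi.
  by rewrite hs1 hs2 cat_take_drop subnKC // => /(_ h1 h2) ->; rewrite mulrA.
have [a0 ha0 | hnone] := pickP (fun a => term a != 0).
- rewrite (bigD1 a0) //= big1 ?addr0 => [|a ha]; first by rewrite (hterm a0 ha0).2.
  have [//|hz] := eqVneq (term a) 0; case/eqP: ha; apply/val_inj.
  by rewrite /= -(hterm _ hz).1 (hterm _ ha0).1.
- by rewrite big1 ?mulr0 ?first_hit_weight_ge0 // => a _; apply/eqP/negbFE/hnone.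
Qed.

Lemma hitP_return i j k m n : m != i ->
  p i m (~~ k) * \sum_(a < n.+1) hitP p m i (~~ k) a * hitP p i j k (n - a)%N
  <= seqsum n (fun s => first_hit_weight i j k n.+1 ((m, ~~ k) :: s)).
Proof.
move=> hmi; apply: le_trans (ler_seqsum (fun s => first_hit_weight_return j k hmi)).
rewrite seqsumZ seqsum_sum [in X in _ <= X](eq_bigr (fun a : 'I_n.+1 =>
  hitP p m i (~~ k) a * hitP p i j k (n - a)%N)) // => a _.
by rewrite seqsum_take_drop -?hitP_seqsum // -ltnS.
Qed.

End FirstHit.

Section HitSeries.
Variable N : nat.
Local Notation step := (step_t N).
Variables (R : realFieldType) (p : 'I_N -> 'I_N -> bool -> R).
Hypothesis p_ge0 : forall a a' k, a != a' -> 0 <= p a a' k.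
Variable lam : R.
Hypothesis lam_ge0 : 0 <= lam.
Implicit Types (i j m : 'I_N) (k : bool) (x : step) (q : 'I_N -> 'I_N -> bool -> R).

Lemma fmap_ge0 q i j k : (forall a b c, a != b -> 0 <= q a b c) -> i != j ->
  0 <= fmap p q lam i j k.
Proof.
move=> hq hij; rewrite /fmap mulr_ge0 // !addr_ge0 ?p_ge0 //.
  by apply: sumr_ge0 => m /andP[hmi hmj]; rewrite mulr_ge0 ?hq // p_ge0 // eq_sym.
by apply: sumr_ge0 => m hmi; rewrite !mulr_ge0 ?hq // p_ge0 // eq_sym.
Qed.

Lemma fmap_le q q' i j k : (forall a b c, a != b -> 0 <= q a b c <= q' a b c) -> i != j ->
  fmap p q lam i j k <= fmap p q' lam i j k.
Proof.
move=> hq hij; rewrite /fmap ler_wpM2l // lerD // ?lerD //.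
- apply: ler_sum => m /andP[hmi hmj]; apply: ler_wpM2l; first by rewrite p_ge0 // eq_sym.
  by case/andP: (hq m j k hmj).
- apply: ler_sum => m hmi.
  case/andP: (hq m i (~~ k) hmi) => h1 h2; case/andP: (hq i j k hij) => h3 h4.
  apply: ler_pM => //; first by rewrite mulr_ge0 // p_ge0 // eq_sym.
  by apply: ler_wpM2l => //; rewrite p_ge0 // eq_sym.
Qed.

Definition hit_series i j k L := \sum_(a < L) hitP p i j k a * lam ^+ a.

Definition first_step_series i j k x M :=
  \sum_(u < M) seqsum u (fun s => first_hit_weight p i j k u.+1 (x :: s)) * lam ^+ u.+1.

Lemma hit_series_ge0 i j k L : 0 <= hit_series i j k L.
Proof. by apply: sumr_ge0 => a _; rewrite mulr_ge0 ?exprn_ge0 ?(hitP_ge0 p_ge0). Qed.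

Lemma first_step_series_ge0 i j k x M : 0 <= first_step_series i j k x M.
Proof.
apply: sumr_ge0 => u _; rewrite mulr_ge0 ?exprn_ge0 //.
by apply: seqsum_ge0 => s _; apply: first_hit_weight_ge0.
Qed.

Lemma hit_series_first_step i j k M :
  hit_series i j k M.+1 = \sum_x first_step_series i j k x M.
Proof.
rewrite /hit_series big_ord_recl hitP0 mul0r add0r exchange_big /=.
by apply: eq_bigr => u _; rewrite hitP_seqsum /= mulr_suml.
Qed.

Lemma first_step_series_direct i j k M : i != j ->
  lam * p i j k <= first_step_series i j k (j, k) M.+1.
Proof.
move=> hij; rewrite /first_step_series big_ord_recl /= first_hit_weight1 // expr1 mulrC.
rewrite lerDl; apply: sumr_ge0 => u _; rewrite mulr_ge0 ?exprn_ge0 //.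
by apply: sumr_ge0 => x _; apply: seqsum_ge0 => s _; apply: first_hit_weight_ge0.
Qed.

Lemma first_step_series_lmul i j k m L M : m != i -> m != j -> i != j -> (L <= M)%N ->
  lam * (p i m k * hit_series m j k L) <= first_step_series i j k (m, k) M.
Proof.
move=> hmi hmj hij hLM.
have -> : first_step_series i j k (m, k) M
          = \sum_(u < M) p i m k * hitP p m j k u * lam ^+ u.+1.
  apply: eq_bigr => u _; rewrite hitP_seqsum -seqsumZ.
  by congr (_ * _); apply: eq_seqsum => s _; apply: first_hit_weight_lmul.
rewrite /hit_series !mulr_sumr.
rewrite (eq_bigr (fun u : 'I_L => p i m k * hitP p m j k u * lam ^+ u.+1)); last first.
  by move=> u _; rewrite exprS; ring.
apply: (ler_sum_ord_widen (F := fun u => p i m k * hitP p m j k u * lam ^+ u.+1)) => // u.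
by rewrite !mulr_ge0 ?exprn_ge0 ?hitP_ge0 // p_ge0 // eq_sym.
Qed.

Lemma first_step_series_return i j k m l : m != i ->
  lam * (p i m (~~ k) * hit_series m i (~~ k) l.+1 * hit_series i j k l.+1)
  <= first_step_series i j k (m, ~~ k) (l.*2).+1.
Proof.
move=> hmi; set M := (l.*2).+1.
apply: (le_trans _ (ler_sum _ (fun (u : 'I_M) _ =>
  ler_wpM2r (exprn_ge0 u.+1 lam_ge0) (hitP_return p_ge0 j k u hmi)))).
rewrite (eq_bigr (fun u : 'I_M => lam * (p i m (~~ k) *
   ((\sum_(a < u.+1) hitP p m i (~~ k) a * hitP p i j k (u - a)%N) * lam ^+ u)))); last first.
  by move=> u _; rewrite exprS; ring.
rewrite -!mulr_sumr -mulrA; apply: ler_wpM2l => //; apply: ler_wpM2l; first by rewrite p_ge0 // eq_sym.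
by apply: ler_mul_truncated_series => // a; apply: hitP_ge0.
Qed.

Lemma fmap_hit_series_le i j k l : i != j ->
  fmap p (fun a b c => hit_series a b c l.+1) lam i j k <= hit_series i j k (l.+1).*2.
Proof.
move=> hij; set M := (l.*2).+1.
have hlM : (l.+1 <= M)%N by rewrite /M ltnS -addnn leq_addl.
rewrite doubleS hit_series_first_step.
have -> : \sum_x first_step_series i j k x M =
    \sum_(v : 'I_N) (first_step_series i j k (v, k) M + first_step_series i j k (v, ~~ k) M).
  transitivity (\sum_(v : 'I_N) \sum_(b : bool) first_step_series i j k (v, b) M).
    by rewrite [RHS]pair_big; apply: eq_big => // -[v b].
  by apply: eq_bigr => v _; rewrite big_bool; case: k; rewrite //= addrC.
rewrite big_split /= /fmap !mulrDr mulr_sumr mulr_sumr; apply: lerD.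
- rewrite [X in _ <= X](bigD1 j) //=; apply: lerD; first exact: first_step_series_direct.
  rewrite [X in _ <= X](bigID (fun v => v != i)) /=; apply: ler_wpDr.
    by apply: sumr_ge0 => v _; apply: first_step_series_ge0.
  rewrite [X in _ <= X](eq_bigl (fun v => (v != i) && (v != j))) => [|v]; last by rewrite andbC.
  by apply: ler_sum => v /andP[hvi hvj]; apply: first_step_series_lmul.
- rewrite [X in _ <= X](bigID (fun v => v != i)) /=; apply: ler_wpDr.
    by apply: sumr_ge0 => v _; apply: first_step_series_ge0.
  by apply: ler_sum => v hv; apply: first_step_series_return.
Qed.

Lemma aseq_bounds n i j k : i != j ->
  0 <= aseq p lam n i j k <= hit_series i j k (2 ^ n.+1).
Proof.
elim: n i j k => [|n IH] i j k hij /=.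
  rewrite fmap_ge0 //= (le_trans _ (fmap_hit_series_le k 0 hij)) //.
  by apply: fmap_le => // a b c hab; rewrite lexx hit_series_ge0.
have aseq_ge0 a b c : a != b -> 0 <= aseq p lam n a b c.
  by move=> hab; case/andP: (IH a b c hab).
rewrite fmap_ge0 //=.
have := fmap_hit_series_le k (2 ^ n.+1).-1 hij.
rewrite prednK ?expn_gt0 // -mul2n -expnS; apply: le_trans.
exact: fmap_le.
Qed.

End HitSeries.

Theorem lemmaA2 (R : realFieldType) (N : nat) (hN : (3 <= N)%N)
  (p : 'I_N -> 'I_N -> bool -> R)
  (hp : forall (i j : 'I_N) (k : bool), i != j -> 0 < p i j k < 1)
  (hsum : forall i : 'I_N,
      \sum_(j : 'I_N | j != i) \sum_(k : bool) p i j k = 1)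
  (lam : R) (hlam : 0 <= lam <= 1) :
  forall (n : nat) (i j : 'I_N) (k : bool), i != j ->
    aseq p lam n i j k
      <= \sum_(m < 2 ^ n.+1) hitP p i j k m * lam ^+ m.
Proof.
move=> n i j k hij.
have p_ge0 a b c : a != b -> 0 <= p a b c by move=> hab; case/andP: (hp a b c hab) => /ltW.
have lam_ge0 : 0 <= lam by case/andP: hlam.
by case/andP: (aseq_bounds p_ge0 lam_ge0 n k hij).
Qed.
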